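(* Let $H,K$ be $n$-Hilbert spaces, fix $a_2,\dots,a_n\in H$, $b_2,\dots,b_n\in K$, $C_1\in\mathcal{GB}(H_F)$, $C_2\in\mathcal{GB}(K_G)$. Let $\{f_i\}_{i=1}^\infty$ be a $C_1$-controlled frame associated to $(a_2,\dots,a_n)$ for $H$ with bounds $A,B$ and $\{g_j\}_{j=1}^\infty$ a $C_2$-controlled frame associated to $(b_2,\dots,b_n)$ for $K$ with bounds $C,D$, with frame operators $S_{C_1}$, $S_{C_2}$. Then $AC\,I_{F\otimes G}\le S_{C_1\otimes C_2}\le BD\,I_{F\otimes G}$, where $I_{F\otimes G}$ is the identity on $H_F\otimes K_G$ and $S_{C_1\otimes C_2}$ is the frame operator of $\{f_i\otimes g_j\}_{i,j=1}^\infty$.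
   Context: Let $n\ge2$. For a complex $n$-Hilbert space $H$ with $n$-inner product $\langle\cdot,\cdot|\cdot,\dots,\cdot\rangle_1$ and $n$-norm $\|x_1,\dots,x_n\|_1=\langle x_1,x_1|x_2,\dots,x_n\rangle_1^{1/2}$, and fixed $a_2,\dots,a_n\in H$, $F=\{a_2,\dots,a_n\}$: $\langle x,y\rangle_F=\langle x,y|a_2,\dots,a_n\rangle_1$ is a semi-inner product on $H$ inducing an inner product on $H/L_F$ ($L_F=\mathrm{span}\,F$); identifying $H/L_F$ with an algebraic complement of $L_F$, $H_F$ is its Hilbert completion, with norm written $\|f,a_2,\dots,a_n\|_1$. Likewise $K$ with $\langle\cdot,\cdot|\cdot,\dots,\cdot\rangle_2$, $G=\{b_2,\dots,b_n\}$, Hilbert space $K_G$. $H\otimes K$ carries the $n$-inner product $\langle f_1\otimes g_1,f_2\otimes g_2|f_3\otimes g_3,\dots,f_n\otimes g_n\rangle=\langle f_1,f_2|f_3,\dots,f_n\rangle_1\langle g_1,g_2|g_3,\dots,g_n\rangle_2$; $H_F\otimes K_G$ is the Hilbert tensor product and $(Q\otimes T)(f\otimes g)=Qf\otimes Tg$. $\mathcal{GB}(\cdot)$: bounded operators with bounded inverse; $\le$ between self-adjoint operators means $\langle Tx,x\rangle\le\langle Sx,x\rangle$ for all $x$. For $C\in\mathcal{GB}(H_F)$, $\{f_i\}\subseteq H$ is a $C$-controlled frame associated to $(a_2,\dots,a_n)$ for $H$ with bounds $A,B$ if $A\|f,a_2,\dots,a_n\|_1^2\le\sum_i\langle f,f_i|a_2,\dots,a_n\rangle_1\langle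 Cf_i,f|a_2,\dots,a_n\rangle_1\le B\|f,a_2,\dots,a_n\|_1^2$ for all $f\in H_F$; its frame operator is $S_Cf=\sum_i\langle f,f_i|a_2,\dots,a_n\rangle_1Cf_i$ (similarly for $K$). The frame operator of $\{f_i\otimes g_j\}$ is $S_{C_1\otimes C_2}(f\otimes g)=\sum_{i,j}\langle f\otimes g,f_i\otimes g_j|a_2\otimes b_2,\dots,a_n\otimes b_n\rangle(C_1\otimes C_2)(f_i\otimes g_j)$. *)

From HB Require Import structures.
From mathcomp Require Import all_boot all_order all_algebra.
From mathcomp Require Import fingroup perm.
From mathcomp Require Import reals complex.
Set Implicit Arguments. Unset Strict Implicit. Unset Printing Implicit Defensive.
Import Order.TTheory GRing.Theory Num.Theory.
Local Open Scope ring_scope.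
Local Open Scope complex_scope.

Section Defs.
Variable R : realType.
Local Notation C := R[i].

(* n-inner product spaces, with n = m.+1 (so the "tail" a_2,...,a_n is an  *)
(* m-tuple).  ip x y z = <x, y | z_1, ..., z_m>.                           *)
Section NInner.
Variables (m : nat) (H : lmodType C) (ip : H -> H -> m.-tuple H -> C).

Definition nsq (v : m.+1.-tuple H) : C := ip (thead v) (thead v) (behead_tuple v).

Definition lin_dependent k (v : k.-tuple H) : Prop :=
  exists c : 'I_k -> C, (exists i, c i != 0) /\ \sum_(i < k) c i *: tnth v i = 0.

Definition is_n_inner_product : Prop :=
  [/\ forall v : m.+1.-tuple H, 0 <= nsq v /\ (nsq v = 0 <-> lin_dependent v),
      forall (v : m.+1.-tuple H) (s : 'S_m.+1),
                   nsq v = nsq [tuple tnth v (s i) | i < m.+1],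
      forall x y z, ip x y z = (ip y x z)^*,
      forall (a : C) x y z, ip (a *: x) y z = a * ip x y z &
      forall x x' y z, ip (x + x') y z = ip x y z + ip x' y z].

Definition nnorm (x : H) (z : m.-tuple H) : C := sqrtC (ip x x z).

Definition n_complete : Prop :=
  forall u : nat -> H,
    (forall z e, 0 < e -> exists N, forall k l, (N <= k)%N -> (N <= l)%N ->
                          nnorm (u k - u l) z < e) ->
    exists x, forall z e, 0 < e -> exists N, forall k, (N <= k)%N ->
                          nnorm (u k - x) z < e.

Definition n_hilbert : Prop := is_n_inner_product /\ n_complete.
End NInner.

Section Hilbert.
Variables (V : lmodType C) (ip : V -> V -> C).

Definition hnorm (x : V) : C := sqrtC (ip x x).

Definition vconv (u : nat -> V) (l : V) : Prop :=
  forall e, 0 < e -> exists N, forall k, (N <= k)%N -> hnorm (u k - l) < e.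

Definition hilbert : Prop :=
  [/\ forall (a : C) x y z, ip (a *: x + y) z = a * ip x z + ip y z,
      forall x y, ip x y = (ip y x)^*,
      forall x, 0 <= ip x x,
      forall x, ip x x = 0 -> x = 0 &
      forall u : nat -> V,
        (forall e, 0 < e -> exists N, forall k l, (N <= k)%N -> (N <= l)%N ->
                   hnorm (u k - u l) < e) ->
        exists x, vconv u x].

Definition linear_op (T : V -> V) : Prop :=
  forall (a : C) x y, T (a *: x + y) = a *: T x + T y.

Definition bounded_op (T : V -> V) : Prop :=
  exists M : R, forall x, hnorm (T x) <= M%:C * hnorm x.

Definition GB (T : V -> V) : Prop :=
  linear_op T /\ bounded_op T /\
  exists T' : V -> V, [/\ cancel T T', cancel T' T & bounded_op T'].
End Hilbert.

Definition cconv (u : nat -> C) (s : C) : Prop :=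
  forall e, 0 < e -> exists N, forall k, (N <= k)%N -> `|u k - s| < e.

(* H_F : the Hilbert completion of (H / L_F, <.,.>_F), given (up to        *)
(* unitary isomorphism) by an inner-product-preserving linear map with     *)
(* dense range  j : H -> H_F  (j x is the class of x).                     *)
Definition completion_of m (H : lmodType C) (ipH : H -> H -> m.-tuple H -> C)
  (a : m.-tuple H) (HF : lmodType C) (ipF : HF -> HF -> C) (j : H -> HF) : Prop :=
  [/\ hilbert ipF,
      forall (c : C) x y, j (c *: x + y) = c *: j x + j y,
      forall x y, ipF (j x) (j y) = ipH x y a &
      forall v e, 0 < e -> exists x, hnorm ipF (v - j x) < e].

Definition hilbert_tensor (HF : lmodType C) (ipF : HF -> HF -> C)
  (KG : lmodType C) (ipG : KG -> KG -> C)
  (W : lmodType C) (ipW : W -> W -> C) (t : HF -> KG -> W) : Prop :=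
  [/\ hilbert ipW,
      forall (c : C) x x' y, t (c *: x + x') y = c *: t x y + t x' y,
      forall (c : C) x y y', t x (c *: y + y') = c *: t x y + t x y',
      forall x x' y y', ipW (t x y) (t x' y') = ipF x x' * ipG y y' &
      forall w e, 0 < e -> exists k (xs : 'I_k -> HF) (ys : 'I_k -> KG),
        hnorm ipW (w - \sum_(i < k) t (xs i) (ys i)) < e].

(* {f_i} is a Cop-controlled frame associated to a (encoded by j) with     *)
(* bounds A, B                                                             *)
Definition ctrl_frame (H HF : lmodType C) (ipF : HF -> HF -> C) (j : H -> HF)
  (Cop : HF -> HF) (f : nat -> H) (A B : R) : Prop :=
  [/\ 0 < A, A <= B &
      forall x : HF, exists s : C,
        [/\ cconv (fun k => \sum_(i < k) ipF x (j (f i)) * ipF (Cop (j (f i))) x) s,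
            A%:C * hnorm ipF x ^+ 2 <= s &
            s <= B%:C * hnorm ipF x ^+ 2]].

Definition frame_op (H HF : lmodType C) (ipF : HF -> HF -> C) (j : H -> HF)
  (Cop : HF -> HF) (f : nat -> H) (S : HF -> HF) : Prop :=
  forall x, vconv ipF (fun k => \sum_(i < k) ipF x (j (f i)) *: Cop (j (f i))) (S x).

Definition tensor_frame_op (H K HF KG W : lmodType C)
  (ipF : HF -> HF -> C) (ipG : KG -> KG -> C) (ipW : W -> W -> C)
  (jF : H -> HF) (jG : K -> KG) (t : HF -> KG -> W)
  (C1 : HF -> HF) (C2 : KG -> KG) (f : nat -> H) (g : nat -> K)
  (S12 : W -> W) : Prop :=
  [/\ linear_op S12, bounded_op ipW S12 &
      forall x y, exists inner : nat -> W,
        (forall i, vconv ipW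
           (fun k => \sum_(l < k) ipW (t x y) (t (jF (f i)) (jG (g l)))
                        *: t (C1 (jF (f i))) (C2 (jG (g l)))) (inner i)) /\
        vconv ipW (fun k => \sum_(i < k) inner i) (S12 (t x y))].

End Defs.

From HB Require Import structures.
From mathcomp Require Import all_boot all_order all_algebra.
From mathcomp Require Import fingroup perm.
From mathcomp Require Import reals complex.
From mathcomp Require Import ring lra.
Import Order.TTheory GRing.Theory Num.Theory.
Local Open Scope ring_scope.
Local Open Scope complex_scope.
Set Implicit Arguments. Unset Strict Implicit. Unset Printing Implicit Defensive.

(* The frame operator S of a controlled frame with bounds A, B gives the hermitian
   form <S x, y>, squeezed between A <x, x> and B <x, x>.  On a finite sum
   w = sum_i x_i (x) y_i, <S12 w, w> = sum_(i,j) <S1 x_i, x_j> <S2 y_i, y_j>.  By the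
   Schur product theorem such double sums are nonnegative for positive semidefinite
   forms, hence monotone in each factor, so A C <w, w> <= <S12 w, w> <= B D <w, w>.
   As S12 is bounded, w |-> <S12 w, w> is continuous, and the inequalities extend
   from the dense subspace of finite sums to all of H_F (x) K_G. *)

Lemma quadratic_ge0_le (R : realFieldType) (p q n : R) : 0 <= n -> 0 <= q ->
  (forall s, 0 <= p - 2 * s * n + s ^+ 2 * n * q) -> n <= p * q.
Proof.
move=> n0 q0 quad_ge0; have [q_eq0|q_neq0] := eqVneq q 0.
  have [->|n_neq0] := eqVneq n 0; first by rewrite q_eq0 mulr0.
  have := quad_ge0 ((p + 1) / (2 * n)).
  have -> : 2 * ((p + 1) / (2 * n)) * n = p + 1 by field; lra.
  rewrite q_eq0 !mulr0 => ?; lra.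
have q_gt0 : 0 < q by rewrite lt_def q_neq0 q0.
have := quad_ge0 q^-1.
have -> : p - 2 * q^-1 * n + q^-1 ^+ 2 * n * q = (p * q - n) / q by field.
by rewrite pmulr_lge0 ?invr_gt0 // subr_ge0.
Qed.

Section ComplexFacts.
Variable R : realType.
Implicit Types (x y : R) (z : R[i]).

Lemma ge0_complexE z : 0 <= z -> z = (complex.Re z)%:C.
Proof. by case: z => a b; rewrite lecE /= => /andP [/eqP ->]. Qed.

Lemma ge0_realC z : 0 <= z -> exists2 x, z = x%:C & 0 <= x.
Proof. by move=> z0; exists (complex.Re z); rewrite -?ler0c -ge0_complexE. Qed.

Lemma conjcM_real x z : conjc (x%:C * z) = x%:C * conjc z.
Proof. by case: z => a b; congr Complex; rewrite /=; ring. Qed.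

Lemma normc_ge_Im z : `|complex.Im z|%:C <= `|z|.
Proof. by case: z => a b; simpc; rewrite -sqrtr_sqr ler_wsqrtr // lerDr sqr_ge0. Qed.

Lemma ge0_approx z : (forall e : R[i], 0 < e -> exists2 z', 0 <= z' & `|z - z'| < e) ->
  0 <= z.
Proof.
case: z => a b zP.
have small e : 0 < e -> `|b| <= 0 + e /\ - a <= 0 + e.
  rewrite -ltcR => /zP [[a' b'] z'0 lt_e].
  move: z'0; rewrite lecE /= => /andP [/eqP b'0 a'0].
  have /ltW := le_lt_trans (normc_ge_Re _) lt_e.
  have /ltW := le_lt_trans (normc_ge_Im _) lt_e.
  rewrite b'0 /= subr0 !lecR => lt_b /ler_normlP [lt_a _].
  by rewrite add0r; split=> //; lra.
have b0 : `|b| <= 0 by apply/ler_addgt0Pr => e /small [].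
have a0 : - a <= 0 by apply/ler_addgt0Pr => e /small [].
by rewrite lecE /= -oppr_le0 a0 andbT -[b == 0]normr_le0.
Qed.
End ComplexFacts.

Section Forms.
Variable R : realType.
Local Notation C := R[i].

Definition hermitian_form (V : lmodType C) (phi : V -> V -> C) : Prop :=
  (forall a x y z, phi (a *: x + y) z = a * phi x z + phi y z) /\
  (forall x y, phi x y = conjc (phi y x)).

Definition psd_form (V : lmodType C) (phi : V -> V -> C) : Prop :=
  hermitian_form phi /\ forall x, 0 <= phi x x.

Section Hermitian.
Variables (V : lmodType C) (phi : V -> V -> C).
Hypothesis phi_herm : hermitian_form phi.

Let phi_linear := proj1 phi_herm.
Let phiC := proj2 phi_herm.

Lemma formDl x y z : phi (x + y) z = phi x z + phi y z.
Proof. by have := phi_linear 1 x y z; rewrite scale1r mul1r. Qed.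

Lemma form0l z : phi 0 z = 0.
Proof. by apply: (addrI (phi 0 z)); rewrite -formDl !addr0. Qed.

Lemma formZl a x z : phi (a *: x) z = a * phi x z.
Proof. by rewrite -[_ *: x]addr0 phi_linear form0l addr0. Qed.

Lemma formNl x z : phi (- x) z = - phi x z.
Proof. by rewrite -scaleN1r formZl mulN1r. Qed.

Lemma formBl x y z : phi (x - y) z = phi x z - phi y z.
Proof. by rewrite formDl formNl. Qed.

Lemma formDr x y z : phi x (y + z) = phi x y + phi x z.
Proof. by rewrite phiC formDl rmorphD /= -!phiC. Qed.

Lemma form0r z : phi z 0 = 0.
Proof. by rewrite phiC form0l conjc0. Qed.

Lemma formZr a x y : phi x (a *: y) = conjc a * phi x y.
Proof. by rewrite phiC formZl rmorphM /= -phiC. Qed.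

Lemma formNr x z : phi x (- z) = - phi x z.
Proof. by rewrite phiC formNl rmorphN /= -phiC. Qed.

Lemma formBr x y z : phi x (y - z) = phi x y - phi x z.
Proof. by rewrite formDr formNr. Qed.

Lemma form_suml k (F : 'I_k -> V) z : phi (\sum_(i < k) F i) z = \sum_(i < k) phi (F i) z.
Proof. exact: (big_morph (fun x => phi x z) (fun x y => formDl x y z) (form0l z)). Qed.

Lemma form_sumr k (F : 'I_k -> V) z : phi z (\sum_(i < k) F i) = \sum_(i < k) phi z (F i).
Proof. exact: (big_morph (phi z) (fun x y => formDr z x y) (form0r z)). Qed.
End Hermitian.

Section Positive.
Variables (V : lmodType C) (phi : V -> V -> C).
Hypothesis phi_psd : psd_form phi.

Let phi_herm := proj1 phi_psd.
Let phi_ge0 := proj2 phi_psd.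

Lemma cauchy_schwarz_sqr x y : `|phi x y| ^+ 2 <= phi x x * phi y y.
Proof.
set c := phi x y.
have [p Ep p0] := ge0_realC (phi_ge0 x).
have [q Eq q0] := ge0_realC (phi_ge0 y).
have [n En n0] := ge0_realC (exprn_ge0 2 (normr_ge0 c)).
rewrite Ep Eq En -rmorphM lecR; apply: quadratic_ge0_le => // s.
have := phi_ge0 (x - (s%:C * c) *: y).
rewrite (formBl phi_herm) !(formBr phi_herm) !(formZl phi_herm) !(formZr phi_herm).
rewrite [phi y x](proj2 phi_herm) -/c conjcM_real Ep Eq -ler0c.
rewrite !(rmorphD, rmorphN, rmorphM, rmorphXn, rmorph_nat) /= -En sqr_normc.
set lhs := (X in 0 <= X -> _); set rhs := (X in _ -> 0 <= X).
by have -> : rhs = lhs by rewrite /lhs /rhs; ring.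
Qed.

Lemma cauchy_schwarz x y : `|phi x y| <= hnorm phi x * hnorm phi y.
Proof.
rewrite -(ler_pXn2r (_ : (0 < 2)%N)) ?nnegrE ?mulr_ge0 ?sqrtC_ge0 ?phi_ge0 //.
by rewrite exprMn !sqrtCK cauchy_schwarz_sqr.
Qed.

Lemma form_eq0r x y : phi y y = 0 -> phi x y = 0.
Proof.
move=> phi_y0; have := cauchy_schwarz_sqr x y; rewrite phi_y0 mulr0 => sqr_le0.
have : `|phi x y| ^+ 2 == 0 by rewrite eq_le sqr_le0 exprn_ge0.
by rewrite expf_eq0 /= normr_eq0 => /eqP.
Qed.
End Positive.
End Forms.

Section Convergence.
Variable R : realType.
Local Notation C := R[i].
Implicit Types (u v : nat -> C) (c s l : C).

Lemma eq_cconv u v l : u =1 v -> cconv u l -> cconv v l.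
Proof. by move=> uv u_l e /u_l [N uN]; exists N => k /uN; rewrite uv. Qed.

Lemma cconv_unique u s l : cconv u s -> cconv u l -> s = l.
Proof.
move=> u_s u_l; apply/eqP; rewrite -subr_eq0 -normr_le0.
apply/ler_addgt0Pr => e; rewrite add0r => e0.
have [N1 uN1] := u_s _ (divr_gt0 e0 (ltr0n _ 2)).
have [N2 uN2] := u_l _ (divr_gt0 e0 (ltr0n _ 2)).
set k := maxn N1 N2.
have -> : s - l = (u k - l) - (u k - s) by ring.
apply: le_trans (ler_normB _ _) _; rewrite (splitr e) addrC.
by apply: ltW; apply: ltrD; [apply: uN1; rewrite leq_maxl | apply: uN2; rewrite leq_maxr].
Qed.

Lemma cconvD u v s l : cconv u s -> cconv v l -> cconv (fun k => u k + v k) (s + l).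
Proof.
move=> u_s v_l e e0.
have [N1 uN1] := u_s _ (divr_gt0 e0 (ltr0n _ 2)).
have [N2 vN2] := v_l _ (divr_gt0 e0 (ltr0n _ 2)).
exists (maxn N1 N2) => k; rewrite geq_max => /andP [kN1 kN2].
rewrite opprD addrACA (splitr e); apply: le_lt_trans (ler_normD _ _) _.
by apply: ltrD; [apply: uN1 | apply: vN2].
Qed.

Lemma cconvMl u s c : cconv u s -> cconv (fun k => c * u k) (c * s).
Proof.
move=> u_s e e0.
have c1_gt0 : 0 < `|c| + 1 by rewrite ltr_wpDl.
have [N uN] := u_s _ (divr_gt0 e0 c1_gt0).
exists N => k /uN lt_e; rewrite -mulrBr normrM.
apply: le_lt_trans (ler_wpM2l (normr_ge0 c) (ltW lt_e)) _.
by rewrite mulrCA gtr_pMr // ltr_pdivrMr // mul1r ltrDl.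
Qed.
End Convergence.

Section FormOrder.
Variables (R : realType) (V : lmodType R[i]).
Implicit Types phi psi : V -> V -> R[i].

Lemma hermitian_formZ (r : R) phi : hermitian_form phi ->
  hermitian_form (fun x y => r%:C * phi x y).
Proof.
move=> [phi_linear phiC]; split=> [a x y z|x y]; first by rewrite phi_linear; ring.
by rewrite conjcM_real -phiC.
Qed.

Lemma psd_formZ (r : R) phi : 0 <= r -> psd_form phi -> psd_form (fun x y => r%:C * phi x y).
Proof.
move=> r0 [phi_herm phi_ge0]; split; first exact: hermitian_formZ.
by move=> x; rewrite mulr_ge0 ?ler0c.
Qed.

Lemma psd_formB phi psi : hermitian_form phi -> hermitian_form psi ->
  (forall x, phi x x <= psi x x) -> psd_form (fun x y => psi x y - phi x y).
Proof.
move=> [phi_linear phiC] [psi_linear psiC] le_phi_psi; split=> [|x]; last by rewrite subr_ge0.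
split=> [a x y z|x y]; first by rewrite phi_linear psi_linear; ring.
by rewrite rmorphB /= -phiC -psiC.
Qed.

Lemma sesquilinear_real_hermitian (b : V -> V -> R[i]) :
  (forall a x y z, b (a *: x + y) z = a * b x z + b y z) ->
  (forall a x y z, b z (a *: x + y) = conjc a * b z x + b z y) ->
  (forall x, complex.Im (b x x) = 0) -> hermitian_form b.
Proof.
move=> b_linear b_antilinear b_real; split=> // x y.
have Exy := b_real (1 *: x + y); rewrite b_linear !b_antilinear conjc1 !mul1r in Exy.
have Eiyx := b_real ('i *: y + x); rewrite b_linear !b_antilinear in Eiyx.
move: Exy Eiyx (b_real x) (b_real y).
case: (b x x) (b x y) (b y x) (b y y) => [? ?] [? ?] [? ?] [? ?] /= *.
congr Complex; lra.
Qed.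
End FormOrder.

Section HilbertSpace.
Variables (R : realType) (V : lmodType R[i]) (ip : V -> V -> R[i]).
Hypothesis ip_hilbert : hilbert ip.

Lemma hilbert_psd : psd_form ip.
Proof. by case: ip_hilbert. Qed.

Lemma hnorm_ge0 x : 0 <= hnorm ip x.
Proof. by rewrite sqrtC_ge0 (proj2 hilbert_psd). Qed.

Lemma vconv_forml u l y : vconv ip u l -> cconv (fun k => ip (u k) y) (ip l y).
Proof.
move=> u_l e e0.
have y1_gt0 : 0 < hnorm ip y + 1 by rewrite ltr_wpDl ?hnorm_ge0.
have [N uN] := u_l _ (divr_gt0 e0 y1_gt0).
exists N => k /uN lt_e; rewrite -(formBl (proj1 hilbert_psd)).
apply: le_lt_trans (cauchy_schwarz hilbert_psd _ _) _.
apply: le_lt_trans (ler_wpM2r (hnorm_ge0 y) (ltW lt_e)) _.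
by rewrite mulrAC ltr_pdivrMr // ltr_pM2l // ltrDl.
Qed.
End HilbertSpace.

Section FrameOperator.
Variables (R : realType) (H HF : lmodType R[i]) (ipF : HF -> HF -> R[i]) (jF : H -> HF).
Variables (Cop S : HF -> HF) (f : nat -> H) (A B : R).
Hypothesis ipF_hilbert : hilbert ipF.
Hypothesis f_frame : ctrl_frame ipF jF Cop f A B.
Hypothesis S_frame_op : frame_op ipF jF Cop f S.

Let ipF_herm := proj1 (hilbert_psd ipF_hilbert).

Lemma frame_op_series x y :
  cconv (fun k => \sum_(i < k) ipF x (jF (f i)) * ipF (Cop (jF (f i))) y) (ipF (S x) y).
Proof.
apply: eq_cconv (vconv_forml ipF_hilbert y (S_frame_op x)) => k.
by rewrite (form_suml ipF_herm); apply: eq_bigr => i _; rewrite (formZl ipF_herm).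
Qed.

Lemma frame_op_bounds x : A%:C * ipF x x <= ipF (S x) x <= B%:C * ipF x x.
Proof.
have [_ _ /(_ x) [s [x_s lo hi]]] := f_frame.
rewrite /hnorm sqrtCK in lo hi.
by rewrite -(cconv_unique x_s (frame_op_series x x)) lo hi.
Qed.

Lemma frame_op_hermitian : hermitian_form (fun x y => ipF (S x) y).
Proof.
have [ipF_linear _] := ipF_herm.
apply: sesquilinear_real_hermitian => [a x y z|a x y z|x].
- apply: cconv_unique (frame_op_series _ _) _.
  apply: eq_cconv (cconvD (cconvMl a (frame_op_series x z)) (frame_op_series y z)) => k.
  by rewrite mulr_sumr -big_split; apply: eq_bigr => i _ /=; rewrite ipF_linear; ring.
- apply: cconv_unique (frame_op_series _ _) _.
  apply: eq_cconv (cconvD (cconvMl (conjc a) (frame_op_series z x)) (frame_op_series z y)) => k.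
  rewrite mulr_sumr -big_split; apply: eq_bigr => i _ /=.
  by rewrite (formDr ipF_herm) (formZr ipF_herm); ring.
- have /andP [lo _] := frame_op_bounds x.
  have [p Ep _] := ge0_realC (proj2 (hilbert_psd ipF_hilbert) x).
  by move: lo; rewrite Ep -rmorphM lecE => /andP [/eqP ->].
Qed.

Lemma frame_op_psd : psd_form (fun x y => ipF (S x) y).
Proof.
split=> [|x]; first exact: frame_op_hermitian.
have /andP [lo _] := frame_op_bounds x; apply: le_trans lo.
have [A_gt0 _ _] := f_frame.
by apply: mulr_ge0; [rewrite ler0c ltW | apply: (proj2 (hilbert_psd ipF_hilbert))].
Qed.

Lemma frame_op_lower_psd : psd_form (fun x y => ipF (S x) y - A%:C * ipF x y).
Proof.
apply: psd_formB _ frame_op_hermitian _ => [|x]; first exact: hermitian_formZ.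
by have /andP [] := frame_op_bounds x.
Qed.

Lemma frame_op_upper_psd : psd_form (fun x y => B%:C * ipF x y - ipF (S x) y).
Proof.
apply: psd_formB frame_op_hermitian _ _ => [|x]; first exact: hermitian_formZ.
by have /andP [] := frame_op_bounds x.
Qed.
End FrameOperator.

Section TensorForm.
Variables (R : realType) (V1 V2 : lmodType R[i]).
Implicit Types (phi : V1 -> V1 -> R[i]) (psi : V2 -> V2 -> R[i]).

Definition tensor_form phi psi k (x : 'I_k -> V1) (y : 'I_k -> V2) : R[i] :=
  \sum_(i < k) \sum_(j < k) phi (x i) (x j) * psi (y i) (y j).

Lemma tensor_form_drop phi psi k (x : 'I_k.+1 -> V1) (y : 'I_k.+1 -> V2) :
  (forall z, psi (y ord_max) z = 0) -> (forall z, psi z (y ord_max) = 0) ->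
  tensor_form phi psi x y =
  tensor_form phi psi (x \o widen_ord (leqnSn k)) (y \o widen_ord (leqnSn k)).
Proof.
move=> psi_l0 psi_r0; rewrite /tensor_form big_ord_recr /=.
rewrite [X in _ + X]big1 ?addr0 => [|j _]; last by rewrite psi_l0 mulr0.
by apply: eq_bigr => i _; rewrite big_ord_recr /= psi_r0 mulr0 addr0.
Qed.

Lemma tensor_form_ge0 phi psi k (x : 'I_k -> V1) (y : 'I_k -> V2) :
  psd_form phi -> psd_form psi -> 0 <= tensor_form phi psi x y.
Proof.
move=> phi_psd psi_psd; have [phi_herm phi_ge0] := phi_psd.
have [psi_herm psi_ge0] := psi_psd; have psiC := proj2 psi_herm.
elim: k x y => [|k IHk] x y; first by rewrite /tensor_form big_ord0.
set n := @ord_max k; set q := psi (y n) (y n).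
have [q0|q_neq0] := eqVneq q 0.
  rewrite tensor_form_drop ?IHk // => z; last exact: form_eq0r.
  by rewrite psiC (form_eq0r psi_psd) ?conjc0.
(* Split each y_i along y_n; the components along y_n contribute
   q * phi u u with u = sum_i c_i x_i, the rest is a sum of size k. *)
pose c i := psi (y i) (y n) / q.
pose y' i := y i - c i *: y n.
have qC : conjc q = q by rewrite [q]ge0_complexE ?psi_ge0 // conjc_real.
have psi_yn i : psi (y i) (y n) = c i * q by rewrite divfK.
have psi_ny j : psi (y n) (y j) = conjc (c j) * q by rewrite psiC psi_yn rmorphM /= qC.
have psi_y i j : psi (y i) (y j) = psi (y' i) (y' j) + c i * conjc (c j) * q.
  rewrite (formBl psi_herm) !(formBr psi_herm) !(formZl psi_herm) !(formZr psi_herm).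
  by rewrite psi_yn psi_ny -/q; ring.
have y'n0 : y' n = 0 by rewrite /y' /c divff // scale1r subrr.
have -> : tensor_form phi psi x y = tensor_form phi psi x y' +
    q * phi (\sum_(i < k.+1) c i *: x i) (\sum_(i < k.+1) c i *: x i).
  rewrite (form_suml phi_herm) mulr_sumr /tensor_form -big_split /=.
  apply: eq_bigr => i _; rewrite (form_sumr phi_herm) mulr_sumr -big_split /=.
  by apply: eq_bigr => j _; rewrite (formZl phi_herm) (formZr phi_herm) psi_y; ring.
apply: addr_ge0; last exact: mulr_ge0 (psi_ge0 _) (phi_ge0 _).
rewrite tensor_form_drop ?IHk // => z; rewrite y'n0.
  exact: (form0l psi_herm).
exact: (form0r psi_herm).
Qed.

Lemma tensor_formZ (a b : R[i]) phi psi k (x : 'I_k -> V1) (y : 'I_k -> V2) :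
  tensor_form (fun u v => a * phi u v) (fun u v => b * psi u v) x y =
  a * b * tensor_form phi psi x y.
Proof.
rewrite /tensor_form mulr_sumr; apply: eq_bigr => i _.
by rewrite mulr_sumr; apply: eq_bigr => j _; ring.
Qed.

Lemma tensor_form_le phi0 phi1 psi0 psi1 k (x : 'I_k -> V1) (y : 'I_k -> V2) :
  psd_form (fun u v => phi1 u v - phi0 u v) -> psd_form phi1 ->
  psd_form psi0 -> psd_form (fun u v => psi1 u v - psi0 u v) ->
  tensor_form phi0 psi0 x y <= tensor_form phi1 psi1 x y.
Proof.
move=> phi01_psd phi1_psd psi0_psd psi01_psd; rewrite -subr_ge0.
have -> : tensor_form phi1 psi1 x y - tensor_form phi0 psi0 x y =
    tensor_form (fun u v => phi1 u v - phi0 u v) psi0 x y +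
    tensor_form phi1 (fun u v => psi1 u v - psi0 u v) x y.
  rewrite /tensor_form -sumrB -big_split; apply: eq_bigr => i _ /=.
  by rewrite -sumrB -big_split; apply: eq_bigr => j _ /=; ring.
by apply: addr_ge0; apply: tensor_form_ge0.
Qed.
End TensorForm.

Lemma near0_quadratic (F : numFieldType) (M a e : F) : 0 <= M -> 0 <= a -> 0 < e ->
  exists2 r, 0 < r & forall x, 0 <= x -> x < r -> M * x * (2 * a + x) < e.
Proof.
move=> M0 a0 e0; set X := M * (2 * a + 1).
have X0 : 0 <= X by rewrite mulr_ge0 // addr_ge0 ?mulr_ge0.
have D0 : 0 < 1 + e + X by rewrite -addrA ltr_wpDr // addr_ge0 // ltW.
exists (e / (1 + e + X)) => [|x x0 x_lt]; first exact: divr_gt0.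
have x_le1 : x <= 1.
  apply/ltW/(lt_le_trans x_lt); rewrite ler_pdivrMr // mul1r [1 + e]addrC -addrA lerDl.
  by rewrite addr_ge0 // ltW.
apply: (le_lt_trans (y := x * X)).
  rewrite [M * x]mulrC -mulrA; apply: (ler_wpM2l x0); apply: (ler_wpM2l M0).
  by rewrite lerD2l.
apply: (le_lt_trans (y := e / (1 + e + X) * X)); first exact/ler_wpM2r/ltW.
by rewrite mulrAC ltr_pdivrMr // ltr_pM2l // -addrA ltr_wpDl // ltrDr.
Qed.

Lemma linear_op_sum (R : realType) (V : lmodType R[i]) (T : V -> V) k (F : 'I_k -> V) :
  linear_op T -> T (\sum_(i < k) F i) = \sum_(i < k) T (F i).
Proof.
move=> T_linear.
have TD x y : T (x + y) = T x + T y by rewrite -[x]scale1r T_linear !scale1r.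
have T0 : T 0 = 0 by apply: (addrI (T 0)); rewrite -TD !addr0.
exact: (big_morph T TD T0).
Qed.

Section Density.
Variables (R : realType) (V : lmodType R[i]) (ip : V -> V -> R[i]).
Hypothesis ip_hilbert : hilbert ip.

Let ip_psd := hilbert_psd ip_hilbert.
Let ip_herm := proj1 ip_psd.

Lemma bounded_op_ge0 T : bounded_op ip T ->
  exists2 M, 0 <= M & forall x, hnorm ip (T x) <= M * hnorm ip x.
Proof.
move=> [M T_le]; exists `|M|%:C => [|x]; first by rewrite ler0c.
by apply: le_trans (T_le x) (ler_wpM2r (hnorm_ge0 ip_hilbert x) _); rewrite lecR ler_norm.
Qed.

Lemma scale_linear_op (c : R[i]) : linear_op (fun x : V => c *: x).
Proof. by move=> a x y; rewrite scalerDr !scalerA mulrC. Qed.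

Lemma scale_bounded_op (c : R[i]) : bounded_op ip (fun x => c *: x).
Proof.
have [r Er _] := ge0_realC (normr_ge0 c); exists r => x.
rewrite -Er le_eqVlt; apply/predU1P; left; rewrite /hnorm (formZl ip_herm) (formZr ip_herm) mulrA -sqr_normc.
by rewrite sqrtCM ?nnegrE ?exprn_ge0 ?(proj2 ip_psd) // sqrCK.
Qed.

Lemma quad_form_sub T M w d : linear_op T -> (forall x, hnorm ip (T x) <= M * hnorm ip x) ->
  `|ip (T w) w - ip (T (w - d)) (w - d)| <= M * hnorm ip d * (2 * hnorm ip w + hnorm ip d).
Proof.
move=> T_linear T_le.
have -> : T (w - d) = T w - T d.
  by rewrite -[w - d]addrC -scaleN1r T_linear scaleN1r addrC.
rewrite (formBl ip_herm) !(formBr ip_herm).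
have -> : ip (T w) w - (ip (T w) w - ip (T w) d - (ip (T d) w - ip (T d) d)) =
  ip (T w) d + ip (T d) w - ip (T d) d by ring.
have cs x y : `|ip (T x) y| <= M * hnorm ip x * hnorm ip y.
  exact: le_trans (cauchy_schwarz ip_psd _ _) (ler_wpM2r (hnorm_ge0 ip_hilbert _) (T_le _)).
apply: le_trans (ler_normB _ _) _; apply: le_trans (lerD (ler_normD _ _) (lexx _)) _.
apply: le_trans (lerD (lerD (cs w d) (cs d w)) (cs d d)) _.
by rewrite le_eqVlt; apply/predU1P; left; ring.
Qed.

Lemma dense_form_le (P : V -> Prop) (T1 T2 : V -> V) :
  linear_op T1 -> bounded_op ip T1 -> linear_op T2 -> bounded_op ip T2 ->
  (forall w e, 0 < e -> exists2 w', P w' & hnorm ip (w - w') < e) ->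
  (forall w, P w -> ip (T1 w) w <= ip (T2 w) w) ->
  forall w, ip (T1 w) w <= ip (T2 w) w.
Proof.
move=> T1_linear /bounded_op_ge0 [M1 M1_ge0 T1_le] T2_linear /bounded_op_ge0 [M2 M2_ge0 T2_le].
move=> P_dense P_le w; rewrite -subr_ge0; apply: ge0_approx => e e0.
set M := M1 + M2.
have T1_le' x : hnorm ip (T1 x) <= M * hnorm ip x.
  by apply: le_trans (T1_le x) (ler_wpM2r (hnorm_ge0 ip_hilbert x) _); rewrite lerDl.
have T2_le' x : hnorm ip (T2 x) <= M * hnorm ip x.
  by apply: le_trans (T2_le x) (ler_wpM2r (hnorm_ge0 ip_hilbert x) _); rewrite lerDr.
have [r r_gt0 r_small] := near0_quadratic (addr_ge0 M1_ge0 M2_ge0) (hnorm_ge0 ip_hilbert w)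
  (divr_gt0 e0 (ltr0n _ 2)).
have [w' /P_le le_w' lt_r] := P_dense w r r_gt0.
exists (ip (T2 w') w' - ip (T1 w') w'); first by rewrite subr_ge0.
have -> : w' = w - (w - w') by rewrite opprB addrC subrK.
set d := w - w' in lt_r *.
have err T : linear_op T -> (forall x, hnorm ip (T x) <= M * hnorm ip x) ->
    `|ip (T w) w - ip (T (w - d)) (w - d)| < e / 2.
  move=> T_linear T_le'; apply: le_lt_trans (quad_form_sub w d T_linear T_le') _.
  exact: r_small (hnorm_ge0 ip_hilbert d) lt_r.
rewrite [X in `|X|](_ : _ = (ip (T2 w) w - ip (T2 (w - d)) (w - d)) -
  (ip (T1 w) w - ip (T1 (w - d)) (w - d))); last by ring.
apply: le_lt_trans (ler_normB _ _) _; rewrite (splitr e).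
exact: ltrD (err _ T2_linear T2_le') (err _ T1_linear T1_le').
Qed.
End Density.

Definition tensor_span (R : realType) (HF KG W : lmodType R[i]) (t : HF -> KG -> W) (w : W) :=
  exists k (xs : 'I_k -> HF) (ys : 'I_k -> KG), w = \sum_(i < k) t (xs i) (ys i).

Section TensorFrame.
Variables (R : realType) (H K HF KG W : lmodType R[i]).
Variables (ipF : HF -> HF -> R[i]) (ipG : KG -> KG -> R[i]) (ipW : W -> W -> R[i]).
Variables (jF : H -> HF) (jG : K -> KG) (t : HF -> KG -> W).
Variables (C1 S1 : HF -> HF) (C2 S2 : KG -> KG) (S12 : W -> W) (f : nat -> H) (g : nat -> K).
Hypothesis ipF_hilbert : hilbert ipF.
Hypothesis ipG_hilbert : hilbert ipG.
Hypothesis W_tensor : hilbert_tensor ipF ipG ipW t.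
Hypothesis S1_frame_op : frame_op ipF jF C1 f S1.
Hypothesis S2_frame_op : frame_op ipG jG C2 g S2.
Hypothesis S12_frame_op : tensor_frame_op ipF ipG ipW jF jG t C1 C2 f g S12.

Lemma hilbert_tensor_hilbert : hilbert ipW.
Proof. by case: W_tensor. Qed.

Lemma tensor_span_dense w e : 0 < e -> exists2 w', tensor_span t w' & hnorm ipW (w - w') < e.
Proof.
have [_ _ _ _ dense] := W_tensor; move=> /(dense w) [k [xs [ys lt_e]]].
by exists (\sum_(i < k) t (xs i) (ys i)); first by exists k, xs, ys.
Qed.

Let ipW_herm := proj1 (hilbert_psd hilbert_tensor_hilbert).

Lemma ip_tensor x y x' y' : ipW (t x y) (t x' y') = ipF x x' * ipG y y'.
Proof. by case: W_tensor. Qed.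

Lemma tensor_frame_op_tensor x y x' y' :
  ipW (S12 (t x y)) (t x' y') = ipF (S1 x) x' * ipG (S2 y) y'.
Proof.
have [_ _ /(_ x y) [inner [inner_lim S12_lim]]] := S12_frame_op.
set v := t x' y'; pose a i := ipF x (jF (f i)) * ipF (C1 (jF (f i))) x'.
have inner_v i : ipW (inner i) v = a i * ipG (S2 y) y'.
  apply: cconv_unique (vconv_forml hilbert_tensor_hilbert v (inner_lim i)) _.
  apply: eq_cconv (cconvMl (a i) (frame_op_series ipG_hilbert S2_frame_op y y')) => k.
  rewrite (form_suml ipW_herm) mulr_sumr; apply: eq_bigr => l _.
  by rewrite (formZl ipW_herm) !ip_tensor /a; ring.
apply: cconv_unique (vconv_forml hilbert_tensor_hilbert v S12_lim) _.
rewrite mulrC; apply: eq_cconv (cconvMl _ (frame_op_series ipF_hilbert S1_frame_op x x')) => k.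
rewrite mulr_sumr (form_suml ipW_herm).
by apply: eq_bigr => i _; rewrite inner_v mulrC.
Qed.

Lemma tensor_frame_op_sum k (xs : 'I_k -> HF) (ys : 'I_k -> KG)
    (w := \sum_(i < k) t (xs i) (ys i)) :
  ipW (S12 w) w = tensor_form (fun u v => ipF (S1 u) v) (fun u v => ipG (S2 u) v) xs ys.
Proof.
have [S12_linear _ _] := S12_frame_op.
rewrite /= linear_op_sum // (form_suml ipW_herm); apply: eq_bigr => i _.
rewrite (form_sumr ipW_herm); apply: eq_bigr => j _.
exact: tensor_frame_op_tensor.
Qed.

Lemma ip_tensor_sum k (xs : 'I_k -> HF) (ys : 'I_k -> KG)
    (w := \sum_(i < k) t (xs i) (ys i)) :
  ipW w w = tensor_form ipF ipG xs ys.
Proof.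
rewrite /= (form_suml ipW_herm); apply: eq_bigr => i _.
by rewrite (form_sumr ipW_herm); apply: eq_bigr => j _; rewrite ip_tensor.
Qed.

Variables (A B Cc Dd : R).
Hypothesis f_frame : ctrl_frame ipF jF C1 f A B.
Hypothesis g_frame : ctrl_frame ipG jG C2 g Cc Dd.

Lemma tensor_span_frame_op_bounds w : tensor_span t w ->
  (A * Cc)%:C * ipW w w <= ipW (S12 w) w <= (B * Dd)%:C * ipW w w.
Proof.
have [A_gt0 AB _] := f_frame; have [Cc_gt0 _ _] := g_frame.
move=> [k [xs [ys ->]]]; rewrite tensor_frame_op_sum ip_tensor_sum !rmorphM -!tensor_formZ.
apply/andP; split.
  apply: tensor_form_le.
  - exact: frame_op_lower_psd ipF_hilbert f_frame S1_frame_op.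
  - exact: frame_op_psd ipF_hilbert f_frame S1_frame_op.
  - exact: psd_formZ (ltW Cc_gt0) (hilbert_psd ipG_hilbert).
  - exact: frame_op_lower_psd ipG_hilbert g_frame S2_frame_op.
apply: tensor_form_le.
- exact: frame_op_upper_psd ipF_hilbert f_frame S1_frame_op.
- exact: psd_formZ (le_trans (ltW A_gt0) AB) (hilbert_psd ipF_hilbert).
- exact: frame_op_psd ipG_hilbert g_frame S2_frame_op.
- exact: frame_op_upper_psd ipG_hilbert g_frame S2_frame_op.
Qed.
End TensorFrame.

Unset Implicit Arguments.

(* n = m.+1, so "n >= 2" is "0 < m"; a = (a_2,...,a_n), b = (b_2,...,b_n). *)
Theorem proposition4p6 (R : realType) (m : nat) (hm : (0 < m)%N)
  (H : lmodType R[i]) (ipH : H -> H -> m.-tuple H -> R[i]) (hH : n_hilbert ipH)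
  (K : lmodType R[i]) (ipK : K -> K -> m.-tuple K -> R[i]) (hK : n_hilbert ipK)
  (a : m.-tuple H) (b : m.-tuple K)
  (HF : lmodType R[i]) (ipF : HF -> HF -> R[i]) (jF : H -> HF)
  (hF : completion_of ipH a ipF jF)
  (KG : lmodType R[i]) (ipG : KG -> KG -> R[i]) (jG : K -> KG)
  (hG : completion_of ipK b ipG jG)
  (W : lmodType R[i]) (ipW : W -> W -> R[i]) (t : HF -> KG -> W)
  (hW : hilbert_tensor ipF ipG ipW t)
  (C1 : HF -> HF) (hC1 : GB ipF C1) (C2 : KG -> KG) (hC2 : GB ipG C2)
  (f : nat -> H) (A B : R) (hf : ctrl_frame ipF jF C1 f A B)
  (g : nat -> K) (Cc Dd : R) (hg : ctrl_frame ipG jG C2 g Cc Dd)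
  (S1 : HF -> HF) (hS1 : frame_op ipF jF C1 f S1)
  (S2 : KG -> KG) (hS2 : frame_op ipG jG C2 g S2)
  (S12 : W -> W) (hS12 : tensor_frame_op ipF ipG ipW jF jG t C1 C2 f g S12) :
  forall w : W,
    (A * Cc)%:C * ipW w w <= ipW (S12 w) w /\
    ipW (S12 w) w <= (B * Dd)%:C * ipW w w.
Proof.
have ipF_hilbert : hilbert ipF by case: hF.
have ipG_hilbert : hilbert ipG by case: hG.
have ipW_hilbert := hilbert_tensor_hilbert hW.
have ipW_herm := proj1 (hilbert_psd ipW_hilbert).
have [S12_linear S12_bounded _] := hS12.
have dense := tensor_span_dense hW.
have bounds := tensor_span_frame_op_bounds ipF_hilbert ipG_hilbert hW hS1 hS2 hS12 hf hg.
move=> w; rewrite -!(formZl ipW_herm); split.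
- apply: (dense_form_le ipW_hilbert (T1 := fun x => (A * Cc)%:C *: x) (T2 := S12)) dense _ w => //.
  + exact: scale_linear_op.
  + exact: scale_bounded_op.
  + by move=> w' /bounds /andP []; rewrite (formZl ipW_herm).
- apply: (dense_form_le ipW_hilbert (T1 := S12) (T2 := fun x => (B * Dd)%:C *: x)) dense _ w => //.
  + exact: scale_linear_op.
  + exact: scale_bounded_op.
  + by move=> w' /bounds /andP []; rewrite (formZl ipW_herm).
Qed.
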